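(* Let $p\in(1,2]$, $\nu\ge2$, and $a_1,\dots,a_\nu\ge0$. Then \[\Big(\sum_{i=1}^\nu a_i\Big)^p-\sum_{i=1}^\nu a_i^p\le\sum_{1\le i<j\le\nu}\big[(a_i+a_j)^p-a_i^p-a_j^p\big].\] *)

From mathcomp Require Import all_boot all_order all_algebra.
From mathcomp Require Import all_classical all_reals all_analysis.

From mathcomp Require Import all_boot all_order all_algebra.
From mathcomp Require Import all_classical all_reals all_analysis.
From mathcomp Require Import ring lra.
Import Order.TTheory GRing.Theory Num.Theory.
Local Open Scope ring_scope.

(* Write gap_p(x, y) = (x + y)^p - x^p - y^p.  The argument is pure calculus:
   1. for 0 <= q <= 1 the increment t |-> (x + t)^q - t^q is nonincreasing
      on (0, +oo) (its derivative is q((x + t)^(q-1) - t^(q-1)) <= 0);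
   2. applying 1. with q = p - 1 to the derivative in b, the function
      b |-> (x + y + b)^p - (x + b)^p - (y + b)^p + b^p is nonincreasing on
      [0, +oo), so its value at b is at most its value gap_p(x, y) at 0;
   3. rearranged, 2. says that x |-> gap_p(x, b) is subadditive, hence
      gap_p(sum_i c_i, b) <= sum_i gap_p(c_i, b);
   4. the inequality follows by induction on nu: adding a last summand b
      raises the left-hand side by gap_p(sum_i a_i, b) and the right-hand
      side by sum_i gap_p(a_i, b). *)

Section PowerGap.
Variable R : realType.
Implicit Types q b x y s t u w : R.

Definition powR_gap p x y : R := (x + y) `^ p - x `^ p - y `^ p.

Lemma is_derive_powR_shift (c r u : R) : 0 < c + u ->
  is_derive u 1 (fun v => (c + v) `^ r) (r * (c + u) `^ (r - 1)).
Proof.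
move=> cu_gt0.
have dshift : derivable (fun v : R => c + v) u 1 by apply: derivableD.
have dpow_val := is_derive1_powR r cu_gt0.
have dpow : derivable (@powR R ^~ r) (c + u) 1 by case: dpow_val.
have -> : (fun v => (c + v) `^ r) = (@powR R ^~ r) \o (fun v => c + v) by [].
apply: DeriveDef.
  by apply/derivable1_diffP; apply: differentiable_comp; exact/derivable1_diffP.
rewrite -derive1E derive1_comp // derive1E derive_val.
by rewrite derive1E deriveD // derive_cst derive_id add0r mulr1.
Qed.

Lemma powR_nonpos_le (d u w : R) : 0 <= d -> 0 < u -> u <= w ->
  w `^ (- d) <= u `^ (- d).
Proof.
move=> d_ge0 u_gt0 uw; have w_gt0 := lt_le_trans u_gt0 uw.
rewrite !powRN lef_pV2 ?posrE ?powR_gt0 //.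
by apply: ge0_ler_powR; rewrite // nnegrE ltW.
Qed.

(* Step 1: concavity of t |-> t^q for 0 <= q <= 1, in the form that the
   increment of length x decreases as its base point t grows. *)
Lemma powR_increment_nonincr q x s t : 0 <= q -> q <= 1 -> 0 <= x ->
  0 < s -> s <= t ->
  (x + t) `^ q - t `^ q <= (x + s) `^ q - s `^ q.
Proof.
move=> q_ge0 q_le1 x_ge0 s_gt0 st.
pose f := (fun v => (x + v) `^ q) - (@powR R ^~ q).
have df w : 0 < w ->
    is_derive w 1 f (q * (x + w) `^ (q - 1) - q * w `^ (q - 1)).
  move=> w_gt0; apply: is_deriveB; last exact: is_derive1_powR.
  by apply: is_derive_powR_shift; rewrite ltr_wpDl.
have s2_gt0 : 0 < s / 2 by rewrite divr_gt0.
apply: (@ler0_derive1_nincry R f (s / 2)) => //.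
- by move=> w; rewrite in_itv/= andbT => sw; case: (df w (lt_trans s2_gt0 sw)).
- move=> w; rewrite in_itv/= andbT => sw; have w_gt0 := lt_trans s2_gt0 sw.
  rewrite derive1E (@derive_val _ _ _ _ _ _ _ (df w w_gt0)) subr_le0 ler_wpM2l // -opprB.
  by apply: powR_nonpos_le; rewrite ?subr_ge0 ?lerDr.
- apply: derivable_within_continuous => w; rewrite in_itv/= andbT => sw.
  by case: (df w (lt_le_trans s2_gt0 sw)).
- by rewrite ler_pdivrMr // ler_peMr ?ltW // ltr1n.
Qed.

Variable p : R.
Hypotheses (p_ge1 : 1 <= p) (p_le2 : p <= 2).
Let p_gt0 : 0 < p. Proof. exact: lt_le_trans p_ge1. Qed.
Let powR0p : (0 : R) `^ p = 0. Proof. by rewrite powR0 ?gt_eqF. Qed.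

(* Step 2: shifting both arguments by b >= 0 does not increase the mixed
   second difference of x |-> x^p (its b-derivative is p times a difference
   of increments of t |-> t^(p-1), which is <= 0 by step 1). *)
Lemma powR_mixed_difference_le x y b : 0 < x -> 0 < y -> 0 <= b ->
  (x + y + b) `^ p - (x + b) `^ p - (y + b) `^ p + b `^ p <= powR_gap p x y.
Proof.
move=> x_gt0 y_gt0 b_ge0.
pose g := (fun v => (x + y + v) `^ p) - (fun v => (x + v) `^ p)
          - (fun v => (y + v) `^ p).
pose f := g + (@powR R ^~ p).
have dg w : 0 <= w -> is_derive w 1 g (p * (x + y + w) `^ (p - 1)
    - p * (x + w) `^ (p - 1) - p * (y + w) `^ (p - 1)).
  move=> w_ge0; apply: is_deriveB; first apply: is_deriveB;
    apply: is_derive_powR_shift; by rewrite ltr_pwDl // ?addr_gt0.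
have df w : 0 < w -> is_derive w 1 f (p * (x + y + w) `^ (p - 1)
    - p * (x + w) `^ (p - 1) - p * (y + w) `^ (p - 1) + p * w `^ (p - 1)).
  by move=> w_gt0; apply: is_deriveD; [exact: dg (ltW w_gt0)|exact: is_derive1_powR].
have -> : powR_gap p x y = f 0.
  have -> : f 0 = (x + y + 0) `^ p - (x + 0) `^ p - (y + 0) `^ p + 0 `^ p by [].
  by rewrite powR0p !addr0.
apply: (@ler0_derive1_nincry R f 0) => //.
- by move=> w; rewrite in_itv/= andbT => w_gt0; case: (df w w_gt0).
- move=> w; rewrite in_itv/= andbT => w_gt0.
  rewrite derive1E (@derive_val _ _ _ _ _ _ _ (df w w_gt0)).
  have q_ge0 : 0 <= p - 1 by rewrite subr_ge0.
  have q_le1 : p - 1 <= 1 by rewrite lerBlDr.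
  have incr := @powR_increment_nonincr (p - 1) x w (y + w)
    q_ge0 q_le1 (ltW x_gt0) w_gt0 (ler_wpDl (ltW y_gt0) (lexx w)).
  rewrite addrA in incr.
  rewrite (_ : _ + _ = p * (((x + y + w) `^ (p - 1) - (y + w) `^ (p - 1))
      - ((x + w) `^ (p - 1) - w `^ (p - 1)))); last by ring.
  by rewrite pmulr_rle0 // subr_le0.
- apply/continuous_within_itvcyP; split.
  + move=> w; rewrite in_itv/= andbT => w_gt0.
    by apply: differentiable_continuous; apply/derivable1_diffP; case: (df w w_gt0).
  + have -> : f 0 = g 0 + 0 `^ p by [].
    rewrite powR0p; apply: cvgD; last exact: powR_cvg0.
    apply: cvg_at_right_filter; apply: differentiable_continuous.
    by apply/derivable1_diffP; case: (dg 0 (lexx 0)).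
Qed.

Lemma powR_gap_subadditive b x y : 0 <= b -> 0 <= x -> 0 <= y ->
  powR_gap p (x + y) b <= powR_gap p x b + powR_gap p y b.
Proof.
move=> b_ge0 x_ge0 y_ge0; rewrite /powR_gap.
have [->|x_neq0] := eqVneq x 0; first by rewrite !add0r powR0p; lra.
have [->|y_neq0] := eqVneq y 0; first by rewrite !addr0 add0r powR0p; lra.
have := @powR_mixed_difference_le x y b
  ltac:(by rewrite lt_def x_neq0) ltac:(by rewrite lt_def y_neq0) b_ge0.
rewrite /powR_gap; lra.
Qed.

Lemma powR_gap_sum_le b n (c : 'I_n -> R) : 0 <= b -> (forall i, 0 <= c i) ->
  powR_gap p (\sum_(i < n) c i) b <= \sum_(i < n) powR_gap p (c i) b.
Proof.
move=> b_ge0 c_ge0.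
suff [] : 0 <= \sum_(i < n) c i /\
  powR_gap p (\sum_(i < n) c i) b <= \sum_(i < n) powR_gap p (c i) b by [].
apply: (big_rec2 (fun u v => 0 <= u /\ powR_gap p u b <= v)).
  by rewrite /powR_gap add0r powR0p subr0 subrr.
move=> i u v _ [u_ge0 gap_le]; split; first by rewrite addr_ge0.
by apply: (le_trans (powR_gap_subadditive _ _ _ b_ge0 (c_ge0 i) u_ge0)); rewrite lerD2l.
Qed.

Lemma powR_sum_le_pair_gaps nu (a : 'I_nu -> R) : (forall i, 0 <= a i) ->
  (\sum_(i < nu) a i) `^ p - \sum_(i < nu) (a i) `^ p <=
  \sum_(i < nu) \sum_(j < nu | (i < j)%N) powR_gap p (a i) (a j).
Proof.
elim: nu a => [|n IH] a a_ge0; first by rewrite !big_ord0 powR0p subrr.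
pose a' (i : 'I_n) := a (widen_ord (leqnSn n) i).
have a'_ge0 i : 0 <= a' i by exact: a_ge0.
have IHa' := IH a' a'_ge0.
have last_gap := powR_gap_sum_le _ _ _ (a_ge0 ord_max) a'_ge0.
have split_pairs (i : 'I_n) : \sum_(j < n.+1 | (widen_ord (leqnSn n) i < j)%N)
    powR_gap p (a' i) (a j) = \sum_(j < n | (i < j)%N) powR_gap p (a' i) (a' j)
                              + powR_gap p (a' i) (a ord_max).
  by rewrite big_mkcond big_ord_recr /= ltn_ord -big_mkcond.
rewrite !big_ord_recr /= [X in _ <= _ + X]big1 ?addr0; last first.
  by move=> j; rewrite ltnNge -ltnS ltn_ord.
rewrite (eq_bigr _ (fun i _ => split_pairs i)) big_split /=.
move: IHa' last_gap; rewrite /powR_gap -/(a' _); lra.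
Qed.

End PowerGap.

Theorem lemmaA5 (R : realType) (p : R) (nu : nat) (a : 'I_nu -> R) :
  1 < p -> p <= 2 -> (2 <= nu)%N -> (forall i, 0 <= a i) ->
  (\sum_(i < nu) a i) `^ p - \sum_(i < nu) (a i) `^ p <=
  \sum_(i < nu) \sum_(j < nu | (i < j)%N)
     ((a i + a j) `^ p - (a i) `^ p - (a j) `^ p).
Proof.
move=> p_gt1 p_le2 _ a_ge0.
have := @powR_sum_le_pair_gaps R p (ltW p_gt1) p_le2 nu a a_ge0.
by rewrite /powR_gap.
Qed.
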